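(* Let $X$ be a shift space and $N\ge0$. The following are equivalent: (1) the extension graph $\mathcal{E}_X(v)$ is acyclic for every $v\in\mathcal{L}(X)$ with $|v|<N$; (2) the graph $G^L_n(X)$ is acyclic for the labeling for every $n\le N$; (3) the graph $G^R_n(X)$ is acyclic for the labeling for every $n\le N$.
   Context: $X\subseteq\mathcal{A}^{\mathbb{Z}}$ is a shift space over a finite alphabet $\mathcal{A}$ with language $\mathcal{L}(X)$, $\mathcal{L}_n(X)$ its words of length $n$. For $v\in\mathcal{L}(X)$, $E^L_X(v)=\{a:av\in\mathcal{L}(X)\}$, $E^R_X(v)=\{b:vb\in\mathcal{L}(X)\}$, and $\mathcal{E}_X(v)$ is the bipartite graph whose vertices are the disjoint union of $\{a^L:a\in E^L_X(v)\}$ and $\{b^R:b\in E^R_X(v)\}$, with an edge $\{a^L,b^R\}$ whenever $avb\in\mathcal{L}(X)$. $G^L_n(X)$ (resp. $G^R_n(X)$) is the multigraph with labeled edges whose vertex set is $\mathcal{A}$ and which has, for each $v\in\mathcal{L}_n(X)$ and each pair of distinct $a,b\in E^L_X(v)$ (resp. $a,b\in E^R_X(v)$), an undirected edge labeled $v$ between $a$ and $b$. A multigraph with labeled edges is acyclic for the labeling if every simple cycle in it uses only edges with the same label. *)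

From mathcomp Require Import all_boot all_order all_algebra.
Set Implicit Arguments. Unset Strict Implicit. Unset Printing Implicit Defensive.
Import GRing.Theory Num.Theory.
Local Open Scope ring_scope.

Definition config (A : finType) := int -> A.

Definition shift_map (A : finType) (x : config A) : config A := fun i => x (i + 1).

(* A shift space: a subset of A^Z that is shift-invariant (sigma(X) = X)
   and closed in the product topology (A discrete). *)
Definition shift_space (A : finType) (X : config A -> Prop) : Prop :=
  (forall x, X x -> X (shift_map x)) /\
  (forall x, X x -> exists y, X y /\ shift_map y = x) /\
  (forall x : config A,
     (forall n : nat, exists y, X y /\ forall i : int, `|i| <= n%:R -> y i = x i) ->
     X x).

Definition in_lang (A : finType) (X : config A -> Prop) (w : seq A) : Prop :=
  exists x, X x /\ exists i : int, w = mkseq (fun k => x (i + k%:Z)) (size w).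

Definition extL (A : finType) (X : config A -> Prop) (v : seq A) (a : A) : Prop :=
  in_lang X (a :: v).
Definition extR (A : finType) (X : config A -> Prop) (v : seq A) (b : A) : Prop :=
  in_lang X (rcons v b).

(* Extension graph E_X(v): bipartite graph on (left copies) + (right copies);
   inl a stands for a^L, inr b for b^R. *)
Definition ext_graph_adj (A : finType) (X : config A -> Prop) (v : seq A)
  (p q : A + A) : Prop :=
  match p, q with
  | inl a, inr b => extL X v a /\ extR X v b /\ in_lang X (a :: rcons v b)
  | inr b, inl a => extL X v a /\ extR X v b /\ in_lang X (a :: rcons v b)
  | _, _ => False
  end.

Definition graph_acyclic (V : eqType) (adj : V -> V -> Prop) : Prop :=
  ~ exists (vs : seq V) (x0 : V),
      [/\ 3 <= size vs, uniq vs &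
          forall i, i < size vs ->
            adj (nth x0 vs i) (nth x0 vs ((i.+1) %% size vs))]%N.

(* A multigraph with labeled edges on vertex set V, labels in L, given by
   edge l a b : "there is an (undirected) edge labeled l between a and b"
   (at most one edge with given label and endpoints). *)
Definition simple_cycle (V L : eqType) (edge : L -> V -> V -> Prop)
  (vs : seq V) (ls : seq L) (x0 : V) (l0 : L) : Prop :=
  let k := size vs in
  let a i := nth x0 vs i in
  let b i := nth x0 vs ((i.+1) %% k) in
  let l i := nth l0 ls i in
  [/\ (2 <= k)%N, size ls = k, uniq vs,
      (forall i, (i < k)%N -> edge (l i) (a i) (b i)) &
      (forall i j, (i < j)%N -> (j < k)%N ->
         ~ (l i = l j /\ ((a i = a j /\ b i = b j) \/ (a i = b j /\ b i = a j))))].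

Definition acyclic_for_labeling (V L : eqType) (edge : L -> V -> V -> Prop) : Prop :=
  forall vs ls x0 l0, simple_cycle edge vs ls x0 l0 ->
    forall i j, (i < size ls)%N -> (j < size ls)%N -> nth l0 ls i = nth l0 ls j.

Definition GL_edge (A : finType) (X : config A -> Prop) (n : nat)
  (v : seq A) (a b : A) : Prop :=
  [/\ in_lang X v, size v = n, a <> b, extL X v a & extL X v b].
Definition GR_edge (A : finType) (X : config A -> Prop) (n : nat)
  (v : seq A) (a b : A) : Prop :=
  [/\ in_lang X v, size v = n, a <> b, extR X v a & extR X v b].

From mathcomp Require Import all_boot all_order all_algebra.
From mathcomp Require Import zify.
Set Implicit Arguments. Unset Strict Implicit. Unset Printing Implicit Defensive.

(* The edges of G^L_{n+1} labelled uc join the letters a, b with auc, buc in L(X).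
   Cutting the last letter off the labels turns a simple cycle a_0, ..., a_{k-1} of
   G^L_{n+1} into a closed walk of G^L_n, so if G^L_n is acyclic for the labeling all
   labels of the cycle share one prefix u, and the cycle becomes a closed walk
   a_0 c_0 a_1 c_1 ... a_{k-1} c_{k-1} of E_X(u) with distinct a_i. Unless the c_i are
   all equal, shortcutting repeated right vertices leaves a cycle of E_X(u).
   Conversely a cycle of E_X(u) has distinct right vertices c_i, hence is a simple
   cycle of G^L_{n+1} with distinct labels u c_i. Induction on n gives (1) <-> (2);
   mirroring X exchanges left and right extensions and gives (1) <-> (3). *)

Lemma modSnE i k : i < k -> i.+1 %% k = if i.+1 < k then i.+1 else 0.
Proof.
move=> lt_ik; case: ifP => [|/negbT]; first exact: modn_small.
by rewrite -leqNgt => le_ki; rewrite (@anti_leq i.+1 k) ?lt_ik ?modnn.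
Qed.

Lemma nth_rcons_mod (T : Type) (x0 x : T) s i : i < (size s).+1 ->
  nth x0 (rcons s x) i = nth x0 (x :: s) (i.+1 %% (size s).+1).
Proof.
move=> lt_is; rewrite nth_rcons (modSnE lt_is) ltnS.
case: ltnP => // le_s_i; have -> : i = size s by lia.
by rewrite eqxx.
Qed.

Lemma rcons_take_last (T : Type) (x0 : T) n v : size v = n.+1 ->
  rcons (take n v) (last x0 v) = v.
Proof.
case/lastP: v => // u c; rewrite size_rcons last_rcons => -[<-].
by rewrite -[rcons u c]cats1 take_size_cat // cats1.
Qed.

Lemma injective_or_min_gap (T : eqType) k (g : nat -> T) :
  {in gtn k &, injective g} \/
  exists i d, [/\ 0 < d, i + d < k, g i = g (i + d) &
                  forall s t, s < t < k -> g s = g t -> d <= t - s].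
Proof.
pose gap d := [exists i : 'I_k, [&& 0 < d, i + d < k & g i == g (i + d)]].
have gapP s t : s < t < k -> g s = g t -> gap (t - s).
  move=> /andP[lt_st lt_tk] g_st; apply/existsP; exists (Ordinal (ltn_trans lt_st lt_tk)).
  by rewrite /= subnKC ?(ltnW lt_st) // subn_gt0 lt_st lt_tk g_st eqxx.
have [/existsP[d0 gap_d0] | /existsPn no_gap] := boolP [exists d : 'I_k, gap d].
  have [d /existsP[[i lt_ik] /and3P[d_gt0 lt_idk /eqP g_id]] min_d] :=
    ex_minnP (ex_intro gap _ gap_d0).
  by right; exists i, d; split=> // s t lt_stk g_st; apply: min_d; apply: gapP.
have no_repeat s t : s < t < k -> g s = g t -> False.
  move=> lt_stk g_st; have /andP[_ lt_tk] := lt_stk.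
  by move: (no_gap (Ordinal (leq_ltn_trans (leq_subr s t) lt_tk))); rewrite gapP.
left=> s t; rewrite !inE => lt_sk lt_tk g_st.
case: (ltngtP s t) => // [lt_st | lt_ts]; first by case: (no_repeat s t); rewrite ?lt_st.
by case: (no_repeat t s); rewrite ?lt_ts.
Qed.

Definition graph_cycle (T : eqType) (adj : T -> T -> Prop) (vs : seq T) (x0 : T) :=
  [/\ 3 <= size vs, uniq vs &
      forall i, i < size vs -> adj (nth x0 vs i) (nth x0 vs (i.+1 %% size vs))].

Lemma graph_cycle_rot1 (T : eqType) (adj : T -> T -> Prop) x0 x s :
  graph_cycle adj (x :: s) x0 -> graph_cycle adj (rcons s x) x0.
Proof.
move=> [size_ge3 uniq_xs adj_xs]; rewrite /graph_cycle size_rcons -rot1_cons rot_uniq.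
split=> // i lt_is; rewrite rot1_cons !nth_rcons_mod ?ltn_pmod //.
exact/adj_xs/ltn_pmod.
Qed.

Lemma graph_cycle_map (T U : eqType) (adj : T -> T -> Prop) (adj' : U -> U -> Prop)
    (h : T -> U) vs x0 :
  injective h -> (forall p q, adj p q -> adj' (h p) (h q)) ->
  graph_cycle adj vs x0 -> graph_cycle adj' (map h vs) (h x0).
Proof.
move=> h_inj h_adj [size_ge3 uniq_vs adj_vs]; rewrite /graph_cycle size_map map_inj_uniq //.
split=> // i lt_is; rewrite !(nth_map x0) ?ltn_pmod //; [exact/h_adj/adj_vs | lia].
Qed.

Lemma graph_acyclic_map (T U : eqType) (adj : T -> T -> Prop) (adj' : U -> U -> Prop)
    (h : T -> U) :
  injective h -> (forall p q, adj p q -> adj' (h p) (h q)) ->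
  graph_acyclic adj' -> graph_acyclic adj.
Proof.
by move=> h_inj h_adj acyc [vs [x0 cyc]]; apply: acyc; exists (map h vs), (h x0);
  apply: graph_cycle_map cyc.
Qed.

Section Bicycles.
Variables (V Q : eqType) (R : V -> Q -> Prop).

(* The closed walk f 0, g 0, f 1, g 1, ..., f k.-1, g k.-1, f 0 in the bipartite graph
   of R, with distinct left vertices. *)
Definition bicycle k (f : nat -> V) (g : nat -> Q) :=
  [/\ 1 < k, {in gtn k &, injective f} &
      forall i, i < k -> R (f i) (g i) /\ R (f (i.+1 %% k)) (g i)].

Lemma bicycle_drop k f g i : bicycle k f g -> 2 < k -> i.+1 < k -> g i = g i.+1 ->
  bicycle k.-1 (f \o bump i.+1) (g \o bump i.+1).
Proof.
move=> [_ f_inj fg] k_gt2 lt_ik g_ii.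
have bump_lt t : t < k.-1 -> bump i.+1 t < k by rewrite /bump; case: leqP => /=; lia.
split; first lia.
  move=> s t s_lt t_lt /f_inj e; apply: (can_inj (bumpK i.+1)).
  by apply: e; rewrite inE bump_lt.
move=> t lt_tk /=; have [lt_ti|le_it] := ltnP t i.
  have -> : bump i.+1 t = t by rewrite /bump; case: leqP => /=; lia.
  have -> : bump i.+1 (t.+1 %% k.-1) = t.+1 %% k.
    by rewrite !modn_small /bump; try case: leqP => /=; lia.
  by apply: fg; lia.
have bump_next : bump i.+1 (t.+1 %% k.-1) = t.+2 %% k.
  rewrite (modSnE lt_tk) (@modSnE t.+1 k) /bump; last lia.
  by case: ifP; case: ifP; case: leqP => /=; lia.
have g_bump : g (bump i.+1 t) = g t.+1.
  by rewrite /bump; case: leqP => /= [lt_ti|_] //; have -> : t = i by lia.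
have f_bump : f (bump i.+1 t) = f t.+1 \/ t = i.
  by rewrite /bump; case: leqP => /= [lt_ti|_]; [right; lia | left].
have [] : R (f t.+1) (g t.+1) /\ R (f (t.+2 %% k)) (g t.+1) by apply: fg; lia.
rewrite bump_next g_bump; split => //.
case: f_bump => [-> // | eq_ti]; rewrite eq_ti in lt_tk *.
by have [+ _] := fg i (ltnW lt_ik); rewrite g_ii /bump ltnn.
Qed.

Lemma bicycle_segment k f g i j : bicycle k f g -> i < j < k -> 1 < j - i ->
  g i = g j -> bicycle (j - i) (f \o addn i.+1) (g \o addn i.+1).
Proof.
move=> [_ f_inj fg] /andP[lt_ij lt_jk] gap g_ij; split => //.
  move=> s t; rewrite !inE => s_lt t_lt /f_inj /= e.
  by apply/eqP; rewrite -(eqn_add2l i.+1) e ?inE //; lia.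
move=> t lt_td /=; have [R_fg R_next] : R (f (i.+1 + t)) (g (i.+1 + t)) /\
    R (f ((i.+1 + t).+1 %% k)) (g (i.+1 + t)) by apply: fg; lia.
split => //; rewrite (modSnE lt_td); case: ifP => [lt_t1d|].
  by rewrite addnS -(modn_small (_ : (i.+1 + t).+1 < k)) //; lia.
move/negbT; rewrite -leqNgt => le_dt1; rewrite addn0.
have -> : i.+1 + t = j by lia.
by rewrite -g_ij; have [_] := fg i (ltn_trans lt_ij lt_jk); rewrite modn_small //; lia.
Qed.

Lemma bicycle_injective k f g : bicycle k f g -> (exists2 p, p < k & g p != g 0) ->
  exists k' f' g', bicycle k' f' g' /\ {in gtn k' &, injective g'}.
Proof.
elim: k {-2}k (leqnn k) f g => [|K IH] k le_kK f g cyc [p lt_pk g_p].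
  by case: cyc; lia.
(* For a repetition g i = g (i + d) of minimal gap d, either d > 1 and the arc between
   the two occurrences closes up with distinct right vertices, or d = 1 and the
   repeated right vertex can be dropped from the walk. *)
have [g_inj | [i [d [d_gt0 lt_idk g_id min_d]]]] := injective_or_min_gap k g.
  by exists k, f, g.
have [d1 | d_gt1] : d = 1 \/ 1 < d by lia.
  rewrite d1 addn1 in lt_idk g_id.
  have k_gt2 : 2 < k.
    case: cyc => k_gt1 _ _; rewrite ltnNge; apply: contra g_p => le_k2.
    have i0 : i = 0 by lia.
    apply/eqP; have [] : p = 0 \/ p = i.+1 by lia.
      by move->.
    by move->; rewrite -g_id i0.
  apply: (IH k.-1 _ (f \o bump i.+1) (g \o bump i.+1)); [lia | exact: bicycle_drop | ].
  exists (if p <= i then p else p.-1); first by case: ifP; lia.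
  rewrite /=; have -> : bump i.+1 (if p <= i then p else p.-1) = if p == i.+1 then i else p.
    by rewrite /bump; case: ifP; case: eqP; case: leqP => /=; lia.
  have -> : bump i.+1 0 = 0 by [].
  by case: (eqVneq p i.+1) => [eq_p | _] //; rewrite g_id -eq_p.
exists d, (f \o addn i.+1), (g \o addn i.+1); split.
  by rewrite -(addKn i d); apply: bicycle_segment cyc _ _ g_id; lia.
move=> s t; rewrite !inE /= => lt_sd lt_td g_st.
case: (ltngtP s t) => // [lt_st | lt_ts].
  have /min_d/(_ g_st) : i.+1 + s < i.+1 + t < k by lia.
  lia.
have /min_d/(_ (esym g_st)) : i.+1 + t < i.+1 + s < k by lia.
lia.
Qed.

Definition bigraph_adj (p q : V + Q) : Prop :=
  match p, q with
  | inl a, inr c | inr c, inl a => R a c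
  | _, _ => False
  end.

Definition is_right (p : V + Q) : bool := if p is inr _ then true else false.

Lemma bigraph_adj_is_right p q : bigraph_adj p q -> is_right q = ~~ is_right p.
Proof. by case: p; case: q. Qed.

Lemma graph_cycle_of_bicycle k f g : bicycle k f g -> {in gtn k &, injective g} ->
  exists vs x0, graph_cycle bigraph_adj vs x0.
Proof.
move=> [k_gt1 f_inj fg] g_inj.
pose h t : V + Q := if odd t then inr (g t./2) else inl (f t./2).
exists (mkseq h k.*2), (h 0); rewrite /graph_cycle size_mkseq; split; first lia.
  rewrite map_inj_in_uniq ?iota_uniq // => s t; rewrite !mem_iota /h /= => lt_s lt_t.
  case: ifP; case: ifP => odd_t odd_s // [e].
    have : s./2 = t./2 by apply: (g_inj _ _ _ _ e); rewrite inE; lia.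
    lia.
  have : s./2 = t./2 by apply: (f_inj _ _ _ _ e); rewrite inE; lia.
  lia.
move=> t lt_t; have lt_t' : t.+1 %% k.*2 < k.*2 by rewrite ltn_pmod //; lia.
have [R_fg R_next] : R (f t./2) (g t./2) /\ R (f (t./2.+1 %% k)) (g t./2) by apply: fg; lia.
rewrite !nth_mkseq // /h; case: (boolP (odd t)) => odd_t.
  have -> : t.+1 %% k.*2 = (t./2.+1 %% k).*2.
    by rewrite (modSnE lt_t) (@modSnE t./2 k); [case: ifP; case: ifP; lia | lia].
  by rewrite odd_double doubleK.
have -> : t.+1 %% k.*2 = t.+1 by rewrite modn_small //; lia.
by rewrite /= odd_t /=; have -> : uphalf t = t./2 by lia.
Qed.

Lemma bicycle_of_graph_cycle_left vs x0 : graph_cycle bigraph_adj vs x0 ->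
  ~~ is_right (nth x0 vs 0) ->
  exists k f g, bicycle k f g /\ {in gtn k &, injective g}.
Proof.
set m := size vs => -[m_ge3 uniq_vs adj_vs] left0.
have adj_succ i : i.+1 < m -> bigraph_adj (nth x0 vs i) (nth x0 vs i.+1).
  by move=> lt_i1m; have := adj_vs i (ltnW lt_i1m); rewrite modn_small.
have rightE i : i < m -> is_right (nth x0 vs i) = odd i.
  elim: i => [|i IHi] lt_im; first exact/negbTE.
  by rewrite (bigraph_adj_is_right (adj_succ i lt_im)) IHi ?(ltnW lt_im).
have m_even : ~~ odd m.
  have lt_m1 : m.-1 < m by lia.
  have := bigraph_adj_is_right (adj_vs _ lt_m1); rewrite prednK ?modnn; last lia.
  rewrite (negbTE left0) rightE // => /esym/negbFE odd_m1.
  by rewrite -(prednK (_ : 0 < m)) /= ?odd_m1 //; lia.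
have [a0 c0] : V * Q.
  by have := adj_succ 0 (leq_trans (isT : 1 < 3) m_ge3); case: (nth x0 vs 0); case: (nth x0 vs 1).
set k := m./2; have m_eq : m = k.*2 by rewrite /k; lia.
pose f t := if nth x0 vs t.*2 is inl a then a else a0.
pose g t := if nth x0 vs t.*2.+1 is inr c then c else c0.
have fE t : t < k -> nth x0 vs t.*2 = inl (f t).
  move=> lt_tk; have /rightE : t.*2 < m by lia.
  by rewrite /f odd_double; case: (nth x0 vs t.*2).
have gE t : t < k -> nth x0 vs t.*2.+1 = inr (g t).
  move=> lt_tk; have /rightE : t.*2.+1 < m by lia.
  by rewrite /g /= odd_double; case: (nth x0 vs t.*2.+1).
have nth_inj i j : i < m -> j < m -> nth x0 vs i = nth x0 vs j -> i = j.
  by move=> lt_im lt_jm /eqP; rewrite nth_uniq // => /eqP.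
exists k, f, g; split; first split.
- lia.
- move=> s t; rewrite !inE => lt_sk lt_tk e.
  have : s.*2 = t.*2 by apply: nth_inj; rewrite ?fE ?e //; lia.
  lia.
- move=> t lt_tk; split.
    have /adj_succ : t.*2.+1 < m by lia.
    by rewrite fE // gE.
  have /adj_vs : t.*2.+1 < m by lia.
  suff -> : t.*2.+2 %% m = (t.+1 %% k).*2 by rewrite gE // fE // ltn_pmod //; lia.
  by rewrite m_eq (modSnE lt_tk) modSnE; [case: ifP; case: ifP; lia | lia].
- move=> s t; rewrite !inE => lt_sk lt_tk e.
  have : s.*2.+1 = t.*2.+1 by apply: nth_inj; rewrite ?gE ?e //; lia.
  lia.
Qed.

Lemma bicycle_of_graph_cycle vs x0 : graph_cycle bigraph_adj vs x0 ->
  exists k f g, bicycle k f g /\ {in gtn k &, injective g}.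
Proof.
case: (boolP (is_right (nth x0 vs 0))) => [right0 | left0 cyc]; last first.
  exact: bicycle_of_graph_cycle_left cyc left0.
case: vs right0 => [|x s] right0 cyc; first by case: cyc.
apply: (bicycle_of_graph_cycle_left (graph_cycle_rot1 cyc)).
have [size_ge3 _ adj_xs] := cyc.
have /adj_xs/bigraph_adj_is_right : 0 < size (x :: s) by [].
rewrite modn_small //=; case: s {cyc adj_xs} right0 size_ge3 => // y s /= -> _.
by move->.
Qed.
End Bicycles.

Definition sum_swap (V Q : Type) (p : V + Q) : Q + V :=
  match p with inl a => inr a | inr c => inl c end.

Lemma sum_swapK (V Q : Type) : cancel (@sum_swap V Q) (@sum_swap Q V).
Proof. by case. Qed.

Lemma bigraph_adj_swap (V Q : eqType) (R : V -> Q -> Prop) (R' : Q -> V -> Prop) p q :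
  (forall a c, R a c -> R' c a) -> bigraph_adj R p q -> bigraph_adj R' (sum_swap p) (sum_swap q).
Proof. by move=> RR'; case: p q => [a|c] [a'|c'] //= /RR'. Qed.

Lemma acyclic_for_labeling_relabel (V L L' : eqType) (E : L -> V -> V -> Prop)
    (E' : L' -> V -> V -> Prop) (h : L -> L') :
  injective h -> (forall l a b, E l a b -> E' (h l) a b) ->
  acyclic_for_labeling E' -> acyclic_for_labeling E.
Proof.
move=> h_inj hE acyc vs ls x0 l0 [k_ge2 size_ls uniq_vs edge distinct] i j lt_i lt_j.
apply: (h_inj); rewrite -!(nth_map l0 (h l0)) //; apply: (acyc vs _ x0); rewrite ?size_map //.
rewrite /simple_cycle size_map; split=> // [t lt_t | s t lt_st lt_t].
  by rewrite (nth_map l0) ?size_ls //; apply/hE/edge.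
rewrite !(nth_map l0) ?size_ls ?(ltn_trans lt_st) // => -[/h_inj eq_l adj].
exact: (distinct s t).
Qed.

Section Language.
Variables (A : finType) (X : config A -> Prop).

Lemma in_lang_cat s t : in_lang X (s ++ t) -> in_lang X s /\ in_lang X t.
Proof.
move=> [x [Xx [i st_eq]]]; split; exists x; split => //.
  exists i; apply: (@eq_from_nth _ (x 0)); first by rewrite size_mkseq.
  move=> j lt_js; have := nth_cat (x 0) s t j; rewrite lt_js => <-.
  by rewrite st_eq !nth_mkseq // size_cat ltn_addr.
exists (i + (size s)%:Z)%R; apply: (@eq_from_nth _ (x 0)); first by rewrite size_mkseq.
move=> j lt_jt; have := nth_cat (x 0) s t (size s + j).
rewrite ltnNge leq_addr addKn /= => <-; rewrite st_eq !nth_mkseq ?size_cat ?ltn_add2l //.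
by rewrite PoszD GRing.addrA.
Qed.

Definition ext_rel (u : seq A) (a c : A) : Prop := in_lang X (a :: rcons u c).

Lemma ext_rel_in_lang u a c : ext_rel u a c -> [/\ in_lang X u, extL X u a & extR X u c].
Proof.
move=> ext_auc; have [ext_au _] : extL X u a /\ in_lang X [:: c].
  by apply: in_lang_cat; rewrite cat_cons cats1.
have [_ ext_uc] := in_lang_cat (s := [:: a]) ext_auc.
by have [_ lang_u] := in_lang_cat (s := [:: a]) ext_au.
Qed.

Lemma ext_graph_adjE u p q : ext_graph_adj X u p q <-> bigraph_adj (ext_rel u) p q.
Proof.
by case: p q => [a|c] [a'|c'] //=; split=> [[_ []] // | /[dup] /ext_rel_in_lang[]].
Qed.

Lemma graph_acyclic_ext u :
  graph_acyclic (ext_graph_adj X u) <-> graph_acyclic (bigraph_adj (ext_rel u)).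
Proof. by split; apply: (graph_acyclic_map (h := id)) => // p q /ext_graph_adjE. Qed.

Lemma GL_edge_rcons n u c a b :
  GL_edge X n.+1 (rcons u c) a b <-> [/\ size u = n, a <> b, ext_rel u a c & ext_rel u b c].
Proof.
split=> [[_ + ne ext_a ext_b] | [size_u ne ext_a ext_b]]; first by rewrite size_rcons => -[].
by split; rewrite ?size_rcons ?size_u //; case: (ext_rel_in_lang ext_a).
Qed.

Lemma GL_edge_prefix n u c a b : GL_edge X n.+1 (rcons u c) a b -> GL_edge X n u a b.
Proof.
case/GL_edge_rcons=> size_u ne /ext_rel_in_lang[lang_u ext_a _] /ext_rel_in_lang[_ ext_b _].
by split.
Qed.

Lemma GL_edge_take n v a b : GL_edge X n.+1 v a b -> GL_edge X n (take n v) a b.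
Proof.
case/lastP: v => [[_ //] | u c /[dup] /GL_edge_rcons[size_u _ _ _] /GL_edge_prefix].
by rewrite -cats1 take_size_cat.
Qed.
End Language.

Section LeftGraphs.
Variables (A : finType) (X : config A -> Prop).

Lemma GL_acyclic0 : acyclic_for_labeling (GL_edge X 0).
Proof.
move=> vs ls x0 l0 [_ size_ls _ edge _] i j lt_i lt_j.
have nil_label t : t < size ls -> nth l0 ls t = [::].
  by rewrite size_ls => /edge[_ /size0nil].
by rewrite !nil_label.
Qed.

Lemma GL_cycle_of_bicycle n u k f g : size u = n -> bicycle (ext_rel X u) k f g ->
  {in gtn k &, injective g} -> ~ acyclic_for_labeling (GL_edge X n.+1).
Proof.
move=> size_u [k_gt1 f_inj fg] g_inj acyc.
have lt_next i : i < k -> i.+1 %% k < k by move=> _; rewrite ltn_pmod //; lia.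
have g_eq i j : i < k -> j < k -> g i = g j -> i = j by move=> *; apply: g_inj.
have f_eq i j : i < k -> j < k -> f i = f j -> i = j by move=> *; apply: f_inj.
have cyc : simple_cycle (GL_edge X n.+1) (mkseq f k) (mkseq (fun i => rcons u (g i)) k)
    (f 0) (rcons u (g 0)).
  rewrite /simple_cycle /= !size_mkseq; split=> //.
  - rewrite map_inj_in_uniq ?iota_uniq // => s t; rewrite !mem_iota; exact: f_eq.
  - move=> i lt_ik; rewrite !nth_mkseq ?lt_next //; have [ext_i ext_next] := fg i lt_ik.
    apply/GL_edge_rcons; split=> // /(f_eq _ _ lt_ik (lt_next i lt_ik)).
    by rewrite (modSnE lt_ik); case: ifP; lia.
  - move=> i j lt_ij lt_jk; rewrite !nth_mkseq ?lt_next ?(ltn_trans lt_ij) //.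
    move=> [/rcons_inj[eq_g] _]; have := g_eq _ _ (ltn_trans lt_ij lt_jk) lt_jk eq_g; lia.
have := acyc _ _ _ _ cyc 0 1; rewrite size_mkseq => /(_ (ltnW k_gt1) k_gt1).
rewrite !nth_mkseq ?(ltnW k_gt1) // => /rcons_inj[eq_g].
by have := g_eq _ _ (ltnW k_gt1) k_gt1 eq_g.
Qed.

Lemma ext_graph_acyclic_of_GL n u : acyclic_for_labeling (GL_edge X n.+1) -> size u = n ->
  graph_acyclic (ext_graph_adj X u).
Proof.
move=> acyc size_u; apply/graph_acyclic_ext=> -[vs [x0 /bicycle_of_graph_cycle]].
by move=> [k [f [g [cyc g_inj]]]]; exact: GL_cycle_of_bicycle size_u cyc g_inj acyc.
Qed.

Lemma GL_cycle_common_prefix n vs ls x0 l0 : acyclic_for_labeling (GL_edge X n) ->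
  simple_cycle (GL_edge X n.+1) vs ls x0 l0 ->
  forall i, i < size vs -> take n (nth l0 ls i) = take n (nth l0 ls 0).
Proof.
move=> acyc_n sc; move: (sc) => [k_ge2 size_ls uniq_vs edge _].
set k := size vs in k_ge2 size_ls edge *.
pose u t := take n (nth l0 ls t).
have lt_next t : t < k -> t.+1 %% k < k by move=> _; rewrite ltn_pmod //; lia.
have vs_inj s t : s < k -> t < k -> nth x0 vs s = nth x0 vs t -> s = t.
  by move=> lt_s lt_t /eqP; rewrite nth_uniq // => /eqP.
(* Cutting the labels yields a simple cycle of G^L_n unless it runs back and forth
   along a single edge. *)
have [/andP[/eqP k2 /eqP u01] | nondeg] := boolP ((k == 2) && (u 0 == u 1)).
  by move=> i; rewrite k2; case: i => [|[|]].
have sc' : simple_cycle (GL_edge X n) vs (map (take n) ls) x0 (take n l0).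
  rewrite /simple_cycle size_map -/k; split=> // [t lt_t | p q lt_pq lt_qk].
    by rewrite (nth_map l0) ?size_ls //; apply/GL_edge_take/edge.
  rewrite !(nth_map l0) ?size_ls ?(ltn_trans lt_pq) // => -[eq_u [[eq_a _] | [eq_ab eq_ba]]].
    by have := vs_inj _ _ (ltn_trans lt_pq lt_qk) lt_qk eq_a; lia.
  have lt_pk := ltn_trans lt_pq lt_qk.
  have := vs_inj _ _ lt_pk (lt_next q lt_qk) eq_ab.
  have := vs_inj _ _ (lt_next p lt_pk) lt_qk eq_ba.
  rewrite (modSnE lt_pk) (modSnE lt_qk); case: ifP; case: ifP; try lia.
  move=> /negbT q1_ge_k lt_p1k eq_q eq_p; case/negP: nondeg.
  have [k2 p0 q1] : [/\ k = 2, p = 0 & q = 1] by split; lia.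
  by move: eq_u; rewrite k2 /u p0 q1 => ->; rewrite !eqxx.
move=> i lt_i; have lt_0 : 0 < k by lia.
have := acyc_n _ _ _ _ sc' i 0; rewrite size_map size_ls !(nth_map l0) ?size_ls //.
by apply.
Qed.

Lemma GL_acyclic_succ n : acyclic_for_labeling (GL_edge X n) ->
  (forall u, in_lang X u -> size u = n -> graph_acyclic (ext_graph_adj X u)) ->
  acyclic_for_labeling (GL_edge X n.+1).
Proof.
move=> acyc_n ext_acyc vs ls x0 l0 sc; have prefixE := GL_cycle_common_prefix acyc_n sc.
move: sc => [k_ge2 size_ls uniq_vs edge _]; rewrite size_ls => i j lt_i lt_j.
set k := size vs in k_ge2 size_ls edge prefixE lt_i lt_j.
set u := take n (nth l0 ls 0); pose c t := last x0 (nth l0 ls t).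
have labelE t : t < k -> nth l0 ls t = rcons u (c t).
  move=> lt_t; have [_ size_l _ _ _] := edge t lt_t.
  by rewrite /u -(prefixE t lt_t) rcons_take_last.
have ext_edge t : t < k ->
    ext_rel X u (nth x0 vs t) (c t) /\ ext_rel X u (nth x0 vs (t.+1 %% k)) (c t).
  by move=> lt_t; have := edge t lt_t; rewrite labelE // => /GL_edge_rcons[].
have cyc : bicycle (ext_rel X u) k (nth x0 vs) c.
  by split=> // s t; rewrite !inE => lt_s lt_t /eqP; rewrite nth_uniq // => /eqP.
have lt_0 : 0 < k by lia.
have := edge 0 lt_0; rewrite labelE // => /GL_edge_rcons[size_u _ /ext_rel_in_lang[lang_u _ _] _].
have [/existsP[t ne_t] | /existsPn const] := boolP [exists t : 'I_k, c t != c 0].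
  have [k' [f' [g' [cyc' g_inj]]]] :=
    bicycle_injective cyc (ex_intro2 _ _ (nat_of_ord t) (ltn_ord t) ne_t).
  have [vs' [x0' cyc_ext]] := graph_cycle_of_bicycle cyc' g_inj.
  by case/graph_acyclic_ext: (ext_acyc u lang_u size_u); exists vs', x0'.
by rewrite !labelE // (eqP (negPn (const (Ordinal lt_i)))) (eqP (negPn (const (Ordinal lt_j)))).
Qed.
End LeftGraphs.

Lemma ext_graph_acyclic_iff_GL (A : finType) (X : config A -> Prop) N :
  (forall v, in_lang X v -> size v < N -> graph_acyclic (ext_graph_adj X v)) <->
  (forall n, n <= N -> acyclic_for_labeling (GL_edge X n)).
Proof.
split=> [ext_acyc | GL_acyc v _ lt_vN].
  elim=> [|n IHn] lt_nN; first exact: GL_acyclic0.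
  by apply: GL_acyclic_succ (IHn (ltnW lt_nN)) _ => u lang_u size_u; apply: ext_acyc => //; lia.
exact: ext_graph_acyclic_of_GL (GL_acyc _ lt_vN) erefl.
Qed.

Section Mirror.
Variables (A : finType) (X : config A -> Prop).

(* Reading the points of X backwards exchanges left and right extensions. *)
Definition mirror : config A -> Prop := fun x => exists2 y, X y & forall i, x i = y (- i)%R.

Lemma rev_mkseq_mirror (x y : config A) i n : (forall j, x j = y (- j)%R) ->
  rev (mkseq (fun k => x (i + k%:Z)%R) n) = mkseq (fun k => y (- i - n%:Z + 1 + k%:Z)%R) n.
Proof.
move=> xy; apply: (@eq_from_nth _ (x 0)) => [|k]; rewrite size_rev !size_mkseq // => lt_kn.
rewrite nth_rev ?size_mkseq // !nth_mkseq // ?xy; last lia.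
by congr y; lia.
Qed.

Lemma in_lang_mirror w : in_lang mirror w <-> in_lang X (rev w).
Proof.
split=> [[x [[y Xy xy] [i w_eq]]] | [y [Xy [j rw_eq]]]].
  exists y; split=> //; exists (- i - (size w)%:Z + 1)%R.
  by rewrite {1}w_eq (rev_mkseq_mirror _ _ xy) size_rev.
exists (fun k => y (- k)%R); split; first by exists y.
have yy k : y k = (fun k => y (- k)%R) (- k)%R by rewrite GRing.opprK.
exists (- j - (size w)%:Z + 1)%R; rewrite size_rev in rw_eq.
by rewrite -{1}[w]revK rw_eq; apply: (@rev_mkseq_mirror y (fun k => y (- k)%R) _ _ yy).
Qed.

Lemma in_lang_mirror_rev w : in_lang mirror (rev w) <-> in_lang X w.
Proof. by rewrite -{2}[w]revK; exact: in_lang_mirror. Qed.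

Lemma GR_edge_mirror n v a b : GR_edge X n v a b <-> GL_edge mirror n (rev v) a b.
Proof.
rewrite /GL_edge /extL -!rev_rcons size_rev.
by split=> -[lang_v size_v ne ext_a ext_b]; split=> //; apply/in_lang_mirror_rev.
Qed.

Lemma GR_acyclic_mirror n :
  acyclic_for_labeling (GR_edge X n) <-> acyclic_for_labeling (GL_edge mirror n).
Proof.
split; apply: (acyclic_for_labeling_relabel (h := rev)) (can_inj (@revK _)) _ => l a b.
  by rewrite -{1}[l]revK => /GR_edge_mirror.
by move/GR_edge_mirror.
Qed.

Lemma ext_rel_mirror v a c : ext_rel mirror (rev v) a c <-> ext_rel X v c a.
Proof. by rewrite /ext_rel in_lang_mirror rev_cons rev_rcons revK. Qed.

Lemma ext_graph_acyclic_mirror v :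
  graph_acyclic (ext_graph_adj mirror (rev v)) <-> graph_acyclic (ext_graph_adj X v).
Proof.
rewrite !graph_acyclic_ext; split; apply: (graph_acyclic_map (can_inj (@sum_swapK _ _))) => p q;
  by apply: bigraph_adj_swap => a c /ext_rel_mirror.
Qed.
End Mirror.

Lemma ext_graph_acyclic_mirror_iff (A : finType) (X : config A -> Prop) N :
  (forall v, in_lang X v -> size v < N -> graph_acyclic (ext_graph_adj X v)) <->
  (forall v, in_lang (mirror X) v -> size v < N -> graph_acyclic (ext_graph_adj (mirror X) v)).
Proof.
split=> ext_acyc v lang_v lt_vN.
  rewrite -[v]revK ext_graph_acyclic_mirror; apply: ext_acyc; rewrite ?size_rev //.
  exact/in_lang_mirror.
rewrite -ext_graph_acyclic_mirror; apply: ext_acyc; rewrite ?size_rev //.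
by apply/in_lang_mirror; rewrite revK.
Qed.

Theorem mainTheorem5 (A : finType) (X : config A -> Prop) (N : nat) :
  shift_space X ->
  [/\ ((forall v : seq A, in_lang X v -> (size v < N)%N ->
          graph_acyclic (ext_graph_adj X v)) <->
       (forall n : nat, (n <= N)%N -> acyclic_for_labeling (GL_edge X n))),
      ((forall n : nat, (n <= N)%N -> acyclic_for_labeling (GL_edge X n)) <->
       (forall n : nat, (n <= N)%N -> acyclic_for_labeling (GR_edge X n))) &
      ((forall n : nat, (n <= N)%N -> acyclic_for_labeling (GR_edge X n)) <->
       (forall v : seq A, in_lang X v -> (size v < N)%N ->
          graph_acyclic (ext_graph_adj X v)))].
Proof.
move=> _.
have ext_GL := ext_graph_acyclic_iff_GL X N.
have ext_mirror := ext_graph_acyclic_mirror_iff X N.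
have ext_GL_mirror := ext_graph_acyclic_iff_GL (mirror X) N.
have GR_GL_mirror : (forall n, n <= N -> acyclic_for_labeling (GR_edge X n)) <->
    (forall n, n <= N -> acyclic_for_labeling (GL_edge (mirror X) n)).
  by split=> acyc n /acyc /GR_acyclic_mirror.
by split; tauto.
Qed.
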